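(* Let $G\in\mathbb{F}_3^{k\times n}$ be a matrix of rank $k$, let $B\subseteq\mathbb{F}_3^k$ be the set of columns of $G$ and let $C\subseteq\mathbb{F}_3^n$ be the row space of $G$. Then $C$ is a linear trifferent code if and only if $\{\vec 0\}\cup B\cup -B$ is a $2$-blocking set in $\mathbb{F}_3^k$.
   Context: A linear trifferent code is a linear subspace $C\subseteq\mathbb{F}_3^n$ such that for any three distinct $x,y,z\in C$ there is a coordinate $i$ with $\{x_i,y_i,z_i\}=\mathbb{F}_3$. A $2$-blocking set in $\mathbb{F}_3^k$ is a set of points meeting every affine subspace (translate of a vector subspace) of dimension $k-2$. *)

From mathcomp Require Import all_boot all_algebra.
Set Implicit Arguments. Unset Strict Implicit. Unset Printing Implicit Defensive.
Import GRing.Theory.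
Local Open Scope ring_scope.

Definition row_space (k n : nat) (G : 'M['F_3]_(k, n)) : {set 'rV['F_3]_n} :=
  [set c | (c <= G)%MS].

Definition trifferent (n : nat) (C : {set 'rV['F_3]_n}) : Prop :=
  forall x y z, x \in C -> y \in C -> z \in C ->
    x != y -> y != z -> x != z ->
    exists i : 'I_n, [set x 0 i; y 0 i; z 0 i] = [set: 'F_3].

Definition in_affine (k : nat) (a : 'rV['F_3]_k) (W : 'M['F_3]_k)
  (x : 'rV['F_3]_k) : bool := (x - a <= W)%MS.

Definition blocking2 (k : nat) (S : {set 'rV['F_3]_k}) : Prop :=
  forall (a : 'rV['F_3]_k) (W : 'M['F_3]_k), \rank W = (k - 2)%N ->
    exists2 x, x \in S & in_affine a W x.

Definition columns (k n : nat) (G : 'M['F_3]_(k, n)) : {set 'rV['F_3]_k} :=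
  [set (col j G)^T | j : 'I_n].

Definition negset (k : nat) (S : {set 'rV['F_3]_k}) : {set 'rV['F_3]_k} :=
  [set - x | x in S].

(* Both conditions say: for all linear forms p, r on F_3^k with p not a
   multiple of r, some column g of G has r(g) = 0 and p(g) <> 0.
   Code side: three elements of F_3 are pairwise distinct iff, with
   u = x - z and v = y - z, u <> 0 and u + v = 0; so for codewords u = pG and
   u + v = rG one needs a coordinate where rG vanishes and pG does not.
   Geometric side: if a is not in W, the affine space a + W of codimension 2
   contains the solutions of r(x) = 0, p(x) = 1 for suitable forms p, r, and a
   column with r(g) = 0, p(g) = s <> 0 yields its point s^-1 g = +-g.
   Conversely, blocking a (k-2)-flat inside {r = 0, p = 1} gives such a column. *)

From mathcomp Require Import all_boot all_algebra zify.
Set Implicit Arguments. Unset Strict Implicit. Unset Printing Implicit Defensive.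
Import GRing.Theory.
Local Open Scope ring_scope.

Lemma colT_mul (R : comPzRingType) k n (G : 'M[R]_(k, n)) (c : 'cV_k) j :
  (col j G)^T *m c = ((c^T *m G) 0 j)%:M.
Proof.
rewrite -[LHS]trmxK trmx_mul trmxK [c^T *m col j G]mx11_scalar tr_scalar_mx !mxE.
by congr scalar_mx; apply: eq_bigr => i _; rewrite !mxE.
Qed.

Section LinearAlgebra.
Variable F : fieldType.

Lemma nsubmx_exists_col m n (A : 'M[F]_(m, n)) (p : 'rV_n) :
  ~~ (p <= A)%MS -> exists c : 'cV_n, A *m c = 0 /\ p *m c = 1.
Proof.
rewrite submxE => /rV0Pn[i]; set s := _ 0 i => s0.
exists (s^-1 *: col i (cokermx A)); rewrite -!scalemxAr !colE.
rewrite ![_ *m (_ *m delta_mx _ _)]mulmxA mulmx_coker mul0mx scaler0; split=> //.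
by rewrite -colE [col i _]mx11_scalar mxE scale_scalar_mx mulVf.
Qed.

Lemma hyperplane_equation m n (V : 'M[F]_(m, n)) : (n.-1 <= \rank V)%N ->
  exists c : 'cV_n, forall x : 'rV_n, (x <= V)%MS = (x *m c == 0).
Proof.
move=> rV; have [fullV | ] := boolP (row_full V).
  by exists 0 => x; rewrite submx_full // mulmx0 eqxx.
rewrite /row_full => nfullV.
have [rV1 n0] : \rank V = n.-1 /\ (0 < n)%N by have := rank_leq_col V; lia.
have [i ci] : exists i, col i (cokermx V) != 0.
  have /matrix0Pn[i [j cij]] : cokermx V != 0.
    by rewrite -mxrank_eq0 mxrank_coker rV1; lia.
  by exists j; apply/cV0Pn; exists i; rewrite mxE.
exists (col i (cokermx V)) => x; apply/idP/idP.
  by rewrite submxE colE mulmxA => /eqP->; rewrite mul0mx.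
move=> xc; have Vc : (V <= kermx (col i (cokermx V)))%MS.
  by rewrite sub_kermx colE mulmxA mulmx_coker mul0mx.
have [_ cV] := mxrank_leqif_sup Vc.
move: cV; rewrite mxrank_ker -[\rank (col i _)]mxrank_tr rank_rV trmx_eq0 ci rV1.
rewrite subn1 eqxx => /esym kerV.
by apply: submx_trans kerV; rewrite sub_kermx.
Qed.

Lemma submx_adds_ker m n (W : 'M[F]_(m, n)) (a x : 'rV_n) (c : 'cV_n) :
  W *m c = 0 -> a *m c = 1 -> (x <= W + a)%MS -> x *m c = 0 -> (x <= W)%MS.
Proof.
move=> Wc ac /sub_addsmxP[[y z] /= ->].
rewrite mulmxDl -!mulmxA Wc ac mulmx0 mulmx1 add0r => ->.
by rewrite mul0mx addr0 submxMl.
Qed.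

Lemma exists_submx_rank m n p (A : 'M[F]_(m, n)) d :
  (d <= \rank A)%N -> (d <= p)%N -> exists B : 'M_(p, n), (B <= A)%MS /\ \rank B = d.
Proof.
move=> dA dp; exists (pid_mx d *m row_base A); split.
  by rewrite -(eq_row_base A) submxMl.
by rewrite mxrankMfree ?row_base_free // rank_pid_mx.
Qed.

End LinearAlgebra.

Lemma F3_neq0_pm1 (s : 'F_3) : s != 0 -> s = 1 \/ s = -1.
Proof. by case: s => [[|[|[|?]]] ?] // _; [left | right]; apply: val_inj. Qed.

Lemma F3_set3_eqT (x y z : 'F_3) :
  [set x; y; z] = [set: 'F_3] <-> x - z != 0 /\ (x - z) + (y - z) = 0.
Proof.
split.
  move/setP=> full; move: (full 0) (full 1) (full (-1)) => {full}; rewrite !inE.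
  by case: x y z => [[|[|[|?]]] ?] [[|[|[|?]]] ?] [[|[|[|?]]] ?] //=; split=> //; apply: val_inj.
case=> xz xyz; apply/setP => t; rewrite !inE; move: xz xyz.
by case: x y z t => [[|[|[|?]]] ?] [[|[|[|?]]] ?] [[|[|[|?]]] ?] [[|[|[|?]]] ?] //= _ /eqP.
Qed.

Lemma F3_addrr n (u : 'rV['F_3]_n) : u + u = - u.
Proof. by apply/rowP => i; rewrite !mxE; case: (u 0 i) => [[|[|[|?]]] ?] //; apply: val_inj. Qed.

Lemma F3_nsubmx_addr n (u v : 'rV['F_3]_n) :
  u != 0 -> v != 0 -> u != v -> ~~ (u <= (u + v)%R)%MS.
Proof.
move=> u0 v0 uv; apply/negP; case/sub_rVP => s us.
have [s0 | /F3_neq0_pm1[s1 | sN1]] := eqVneq s 0.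
- by move: u0; rewrite us s0 scale0r eqxx.
- move/eqP: v0; apply; apply: (addrI u).
  by rewrite addr0 [RHS]us s1 scale1r.
- have : u + u + v = 0 by rewrite -addrA {1}us sN1 scaleN1r addNr.
  by rewrite F3_addrr addrC => /subr0_eq vu; rewrite vu eqxx in uv.
Qed.

Definition separating k n (G : 'M['F_3]_(k, n)) : Prop :=
  forall p r : 'rV_k, ~~ (p <= r)%MS ->
    exists j, (p *m G) 0 j != 0 /\ (r *m G) 0 j = 0.

Lemma separating_trifferent k n (G : 'M['F_3]_(k, n)) :
  separating G -> trifferent (row_space G).
Proof.
move=> sepG x y z; rewrite !inE => xG yG zG xy yz xz.
have diffG w : (w <= G)%MS -> ((w - z)%R <= G)%MS by move=> wG; rewrite addmx_sub ?eqmx_opp.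
pose u := x - z; pose v := y - z.
have uvG : ((u + v)%R <= G)%MS by rewrite addmx_sub ?diffG.
have nsub : ~~ (u <= (u + v)%R)%MS.
  by apply: F3_nsubmx_addr; rewrite ?subr_eq0 //; apply: contra_neq xy => /addIr.
have [|j []] := sepG (u *m pinvmx G) ((u + v) *m pinvmx G).
  by apply: contra nsub => /(submxMr G); rewrite !mulmxKpV ?diffG.
rewrite !mulmxKpV ?diffG // => uj uvj.
by exists j; apply/F3_set3_eqT; move: uj uvj; rewrite !mxE.
Qed.

Lemma trifferent_separating k n (G : 'M['F_3]_(k, n)) :
  row_free G -> trifferent (row_space G) -> separating G.
Proof.
move=> Gfree trif p r npr.
have p0 : p != 0 by apply: contraNneq npr => ->; rewrite sub0mx.
have pr : p != r by apply: contraNneq npr => ->.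
have pNr : p != - r by apply: contraNneq npr => ->; rewrite eqmx_opp.
have injG := inj_eq (row_free_inj Gfree).
have [||||||j] := trif (p *m G) ((r - p) *m G) 0; rewrite ?inE ?submxMl ?sub0mx //.
- rewrite injG; apply: contra_neq pNr => prp.
  by rewrite -[r](subrK p) -prp F3_addrr opprK.
- by rewrite -(mul0mx _ G) injG subr_eq0 eq_sym.
- by rewrite -(mul0mx _ G) injG.
have -> : (0 : 'rV['F_3]_n) 0 j = 0 by rewrite mxE.
case/F3_set3_eqT; rewrite !subr0 => pj rj.
by exists j; split=> //; rewrite -[r](subrK p) mulmxDl mxE addrC.
Qed.

Definition sym_columns k n (G : 'M['F_3]_(k, n)) : {set 'rV['F_3]_k} :=
  0 |: (columns G :|: negset (columns G)).

Lemma sym_columnsP k n (G : 'M['F_3]_(k, n)) x :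
  reflect (x = 0 \/ exists j (s : 'F_3), s != 0 /\ x = s *: (col j G)^T)
          (x \in sym_columns G).
Proof.
apply: (iffP idP).
  rewrite !inE => /orP[/eqP-> | /orP[/imsetP[j _ ->] | /imsetP[_ /imsetP[j _ ->] ->]]].
  - by left.
  - by right; exists j, 1; rewrite scale1r oner_neq0.
  - by right; exists j, (-1); rewrite scaleN1r oppr_eq0 oner_neq0.
have colG j : (col j G)^T \in columns G by apply: imset_f.
case=> [-> | [j [s [/F3_neq0_pm1[]-> ->]]]]; rewrite !inE ?eqxx //.
  by rewrite scale1r colG orbT.
by rewrite scaleN1r (imset_f -%R) ?orbT.
Qed.

Lemma separating_blocking2 k n (G : 'M['F_3]_(k, n)) :
  separating G -> blocking2 (sym_columns G).
Proof.
move=> sepG a W rW; rewrite /in_affine.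
have [aW | naW] := boolP (a <= W)%MS.
  by exists 0; [apply/sym_columnsP; left | rewrite sub0r eqmx_opp].
have [c [Wc ac]] := nsubmx_exists_col naW.
have [|h Vh] := @hyperplane_equation _ _ _ (W + a)%MS.
  have : (W < W + a)%MS.
    by rewrite ltmxE addsmxSl; apply: contra naW; apply: submx_trans (addsmxSr W a).
  by rewrite ltmxErank rW => /andP[_]; lia.
have ah : a *m h = 0 by apply/eqP; rewrite -Vh addsmxSr.
have [|j [cj hj]] := sepG c^T h^T.
  apply/negP => /submxP[D cD]; move/eqP: (@oner_neq0 'M['F_3]_1); apply.
  by rewrite -ac -[c]trmxK cD trmx_mul trmxK mulmxA ah mul0mx.
exists (((c^T *m G) 0 j)^-1 *: (col j G)^T).
  by apply/sym_columnsP; right; exists j, ((c^T *m G) 0 j)^-1; rewrite invr_eq0.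
apply: (submx_adds_ker Wc ac).
  by rewrite Vh mulmxBl -scalemxAl colT_mul hj raddf0 scaler0 ah subrr.
by rewrite mulmxBl -scalemxAl colT_mul scale_scalar_mx mulVf // ac subrr.
Qed.

Lemma blocking2_separating k n (G : 'M['F_3]_(k, n)) :
  blocking2 (sym_columns G) -> separating G.
Proof.
move=> block p r npr.
have [c [rc pc]] := nsubmx_exists_col npr.
pose K := kermx (col_mx p r)^T.
have [W [WK rW]] : exists W : 'M_k, (W <= K)%MS /\ \rank W = (k - 2)%N.
  apply: exists_submx_rank; rewrite ?leq_subr // mxrank_ker mxrank_tr.
  by have := rank_leq_row (col_mx p r); lia.
have onW y : (y - c^T <= W)%MS -> y *m p^T = 1 /\ y *m r^T = 0.
  move/submx_trans/(_ WK); rewrite sub_kermx tr_col_mx mul_mx_row row_mx_eq0.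
  rewrite !mulmxBl -!trmx_mul pc rc trmx1 trmx0.
  by case/andP=> /eqP/subr0_eq-> /eqP/subr0_eq->.
have [x /sym_columnsP[-> | [j [s [s0 ->]]]] /onW[xp xr]] := block c^T W rW.
  by move: (@oner_neq0 'M['F_3]_1); rewrite -xp mul0mx eqxx.
rewrite -!scalemxAl !colT_mul !trmxK !scale_scalar_mx in xp xr.
exists j; split.
  apply/eqP => pj0; move: xp; rewrite pj0 mulr0 raddf0 => /esym/eqP.
  by rewrite oner_eq0.
move/(congr1 (fun A : 'M_1 => A 0 0)): xr; rewrite !mxE mulr1n => /eqP.
by rewrite mulf_eq0 (negPf s0) => /eqP.
Qed.

Theorem theorem6p1 (k n : nat) (G : 'M['F_3]_(k, n)) :
  \rank G = k ->
  (trifferent (row_space G) <->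
   blocking2 (0 |: (columns G :|: negset (columns G)))).
Proof.
move=> rG; have Gfree : row_free G by rewrite /row_free rG.
split=> [/(trifferent_separating Gfree)/separating_blocking2 //|].
by move/blocking2_separating/separating_trifferent.
Qed.
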